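(* Let $\mathcal{H}=(V,\mathcal{A})$ be a multi-head HyTN that contains a negative cycle. Then $\mathcal{H}$ admits no feasible scheduling.
   Context: A multi-head HyTN is a pair $\mathcal{H}=(V,\mathcal{A})$, $V$ a finite node set, $\mathcal{A}$ a finite set of hyperarcs $A=(t_A,H_A,w_A)$ with tail $t_A\in V$, nonempty head set $H_A\subseteq V\setminus\{t_A\}$ and weights $w_A(v)\in\mathbb{R}$ for $v\in H_A$. A scheduling $s:V\to\mathbb{R}$ is feasible if $s(t_A)\ge\min_{v\in H_A}\{s(v)-w_A(v)\}$ for all $A\in\mathcal{A}$. A cycle is a pair $(S,\mathcal{C})$ with $S\subseteq V$, $\mathcal{C}\subseteq\mathcal{A}$, such that $S=\bigcup_{A\in\mathcal{C}}(H_A\cup\{t_A\})\neq\emptyset$ and for every $v\in S$ there is a unique $A\in\mathcal{C}$ with $t_A=v$, denoted $a(v)$. A finite cyclic sequence of the cycle is a sequence $v_1,\ldots,v_p$ of nodes of $S$ with $v_{t+1}\in H_{a(v_t)}$ for $1\le t<p$, $v_p=v_1$, and no other repeated node. The cycle is negative if every finite cyclic sequence $v_1,\ldots,v_p$ satisfies $\sum_{t=1}^{p-1}w_{a(v_t)}(v_{t+1})<0$. *)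

From HB Require Import structures.
From mathcomp Require Import all_boot all_order all_algebra.
Set Implicit Arguments. Unset Strict Implicit. Unset Printing Implicit Defensive.
Import Order.TTheory GRing.Theory Num.Theory.
Local Open Scope ring_scope.

(* A multi-head HyTN over a finite node type V: the hyperarcs are indexed by a
   finite type I; hyperarc A has tail [tail A], head set [head A] and weights
   [weight A v] (only meaningful for v in head A). *)
Record HyTN (V I : finType) (R : realFieldType) := MkHyTN {
  tail : I -> V;
  head : I -> {set V};
  weight : I -> V -> R }.

Definition wf_HyTN (V I : finType) (R : realFieldType) (H : HyTN V I R) : Prop :=
  forall A : I, head H A != set0 /\ tail H A \notin head H A.

(* s(t_A) >= min_{v in H_A} (s v - w_A v); since H_A is finite and nonempty,
   this is: some v in H_A achieves s v - w_A v <= s t_A. *)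
Definition feasible (V I : finType) (R : realFieldType) (H : HyTN V I R)
  (s : V -> R) : Prop :=
  forall A : I, exists2 v, v \in head H A & s v - weight H A v <= s (tail H A).

Definition is_cycle (V I : finType) (R : realFieldType) (H : HyTN V I R)
  (S : {set V}) (C : {set I}) : Prop :=
  S = \bigcup_(A in C) (tail H A |: head H A) /\ S != set0 /\
  (forall v, v \in S -> exists! A, A \in C /\ tail H A = v).

Definition cycle_arc_map (V I : finType) (R : realFieldType) (H : HyTN V I R)
  (S : {set V}) (C : {set I}) (a : V -> I) : Prop :=
  forall v, v \in S -> a v \in C /\ tail H (a v) = v.

(* A finite cyclic sequence v_1, ..., v_p (v_p = v_1, p >= 2) is represented by the
   duplicate-free nonempty list l = [v_1; ...; v_{p-1}] of nodes of S; the
   successor of v_t is [next l v_t] (cyclically), and we need v_{t+1} in H_{a(v_t)}. *)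
Definition cyclic_sequence (V I : finType) (R : realFieldType) (H : HyTN V I R)
  (S : {set V}) (a : V -> I) (l : seq V) : Prop :=
  l != [::] /\ uniq l /\ {subset l <= S} /\
  (forall v, v \in l -> next l v \in head H (a v)).

Definition cycle_weight (V I : finType) (R : realFieldType) (H : HyTN V I R)
  (a : V -> I) (l : seq V) : R :=
  \sum_(v <- l) weight H (a v) (next l v).

Definition negative_cycle (V I : finType) (R : realFieldType) (H : HyTN V I R)
  (S : {set V}) (C : {set I}) : Prop :=
  is_cycle H S C /\
  forall (a : V -> I), cycle_arc_map H S C a ->
  forall l : seq V, cyclic_sequence H S a l -> cycle_weight H a l < 0.

Definition has_negative_cycle (V I : finType) (R : realFieldType) (H : HyTN V I R)
  : Prop := exists S C, negative_cycle H S C.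

From Pilot Require Import Defs.
From mathcomp Require Import all_boot all_order all_algebra.
Set Implicit Arguments. Unset Strict Implicit. Unset Printing Implicit Defensive.
Import Order.TTheory GRing.Theory Num.Theory.

(* Following such a head from every node of a cycle
   defines a successor map on its node set, which must close up into a
   cyclic sequence; along it the weights dominate the increments of [s], whose
   sum telescopes to 0, so its weight is nonnegative. *)

Lemma perm_map_next (T : eqType) (l : seq T) : uniq l -> perm_eq (map (next l) l) l.
Proof.
move=> Ul; apply: uniq_perm => //.
  by rewrite map_inj_uniq //; apply: can_inj (prev_next Ul).
move=> y; apply/mapP/idP => [[x xl ->]|yl]; first by rewrite mem_next.
by exists (prev l y); rewrite ?mem_prev ?next_prev.
Qed.

Lemma fcycle_orbit_iter (T : finType) (f : T -> T) (x : T) :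
  exists n, fcycle f (orbit f (iter n f x)).
Proof.
have /loopingP/(_ (order f x))/trajectP[i lt_i_ord eq_iter] := looping_order f x.
exists i; apply: (all_iffLR (@orbitPcycle T f (iter i f x)) 3 0).
exists (order f x - i).-1.
by rewrite prednK ?subn_gt0 // -iterD subnK ?(ltnW lt_i_ord).
Qed.

Lemma fcycle_orbit_sub (T : finType) (f : T -> T) (S : {pred T}) (x : T) :
  {homo f : y / y \in S} -> x \in S ->
  exists2 y, fcycle f (orbit f y) & {subset orbit f y <= S}.
Proof.
move=> fS xS; have iterS n : iter n f x \in S by elim: n => //= n; apply: fS.
have [n cyc] := fcycle_orbit_iter f x; exists (iter n f x) => // z.
by rewrite -fconnect_orbit => /iter_findex <-; rewrite -iterD iterS.
Qed.

Local Open Scope ring_scope.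

Lemma sumr_next_sub (T : eqType) (M : zmodType) (p : T -> M) (l : seq T) :
  uniq l -> \sum_(v <- l) (p (next l v) - p v) = 0.
Proof.
move=> Ul; rewrite sumrB -(big_map (next l) xpredT p).
by rewrite (perm_big _ (perm_map_next Ul)) subrr.
Qed.

Lemma sum_ge0_potential (T : eqType) (R : numDomainType) (p w : T -> R) (l : seq T) :
  uniq l -> (forall v, v \in l -> p (next l v) - w v <= p v) ->
  0 <= \sum_(v <- l) w v.
Proof.
move=> Ul pw; rewrite -{1}(sumr_next_sub p Ul) !big_seq.
by apply: ler_sum => v vl; rewrite lerBlDr addrC -lerBlDr pw.
Qed.

Section HyTNCycles.

Variables (V I : finType) (R : realFieldType) (H : HyTN V I R).

Lemma cycle_arc_map_exists S C :
  is_cycle H S C -> exists a, cycle_arc_map H S C a.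
Proof.
case=> _ [/set0Pn[v0 v0S] arcP]; have [A0 _] := arcP v0 v0S.
exists (fun v => odflt A0 [pick A in C | tail H A == v]) => v vS.
case: pickP => [A /andP[inC /eqP tA]|no_arc] //=.
by have [A [[inC tA] _]] := arcP v vS; have := no_arc A; rewrite inC tA eqxx.
Qed.

Lemma feasible_head_choice (s : V -> R) : feasible H s ->
  exists g : I -> V, forall A,
    g A \in Defs.head H A /\ s (g A) - weight H A (g A) <= s (tail H A).
Proof.
move=> feas; exists (fun A => odflt (tail H A)
  [pick v in Defs.head H A | s v - weight H A v <= s (tail H A)]) => A.
case: pickP => [v /andP[]|no_head] //=.
by have [v vh vw] := feas A; have := no_head v; rewrite vh vw.
Qed.

Lemma head_sub_cycle S C A :
  is_cycle H S C -> A \in C -> {subset Defs.head H A <= S}.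
Proof.
by case=> -> _ inC v vh; apply/bigcupP; exists A => //; rewrite in_setU1 vh orbT.
Qed.

Lemma orbit_cyclic_sequence (S : {set V}) (a : V -> I) (f : V -> V) (x : V) :
  (forall v, v \in S -> f v \in Defs.head H (a v)) ->
  fcycle f (orbit f x) -> {subset orbit f x <= S} ->
  cyclic_sequence H S a (orbit f x).
Proof.
move=> fH cyc orbS; split; first by case: (orbit f x) (in_orbit f x).
split; first exact: orbit_uniq.
by split=> // v vl; rewrite (nextE cyc vl) fH ?orbS.
Qed.

End HyTNCycles.

Theorem mainTheorem4 (V I : finType) (R : realFieldType) (H : HyTN V I R) :
  wf_HyTN H -> has_negative_cycle H -> ~ (exists s : V -> R, feasible H s).
Proof.
move=> _ [S [C [cycSC negSC]]] [s /feasible_head_choice[g gP]].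
have [a aP] := cycle_arc_map_exists cycSC.
pose f := g \o a.
have fH v : v \in S -> f v \in Defs.head H (a v) by move=> _; exact: proj1 (gP _).
have fS : {homo f : v / v \in S}.
  by move=> v vS; have [aC _] := aP v vS; apply: head_sub_cycle cycSC aC _ (fH v vS).
have [_ [/set0Pn[v0 v0S] _]] := cycSC.
have [x cyc orbS] := fcycle_orbit_sub fS v0S.
suff : 0 <= cycle_weight H a (orbit f x).
  by rewrite leNgt (negSC a aP _ (orbit_cyclic_sequence fH cyc orbS)).
apply: (sum_ge0_potential (p := s)) (orbit_uniq _ _) _ => v vl.
have [_ tail_av] := aP v (orbS v vl).
by rewrite (nextE cyc vl); move: (proj2 (gP (a v))); rewrite tail_av.
Qed.
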